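(* Let $T>0$, let $H_C:\mathbb R\to\mathbb C^{N\times N}$ be a continuous family of self-adjoint matrices, let $Q=Q^*\in\mathbb C^{N\times N}$ with $Q\neq0$, and suppose the decoupling condition $\int_0^T U_C(\tau,0)\,Q\,U_C(\tau,0)^*\,d\tau = 0$ holds. Then $$\int_0^T\|H_C(t)\|\,dt \ \ge\ \frac12.$$
   Context: $U_C(t,s)$ is the unitary propagator on $\mathbb C^N$ solving $\partial_tU_C(t,s)=-iH_C(t)U_C(t,s)$, $\partial_sU_C(t,s)=iU_C(t,s)H_C(s)$, $U_C(s,s)=\mathbf 1$; $\|\cdot\|$ is the operator norm on $\mathbb C^N$. *)

From Stdlib Require Import Reals Lra ClassicalEpsilon.
Open Scope R_scope.

Record C := mkC { Re : R; Im : R }.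

Definition C0 : C := mkC 0 0.
Definition C1 : C := mkC 1 0.
Definition Cadd (a b : C) : C := mkC (Re a + Re b) (Im a + Im b).
Definition Cmul (a b : C) : C :=
  mkC (Re a * Re b - Im a * Im b) (Re a * Im b + Im a * Re b).
Definition Cconj (a : C) : C := mkC (Re a) (- Im a).
Definition Cminus_i : C := mkC 0 (-1).
Definition Cnorm2 (a : C) : R := Re a * Re a + Im a * Im a.

Fixpoint Csum (n : nat) (f : nat -> C) : C :=
  match n with O => C0 | S k => Cadd (Csum k f) (f k) end.
Fixpoint Rsum (n : nat) (f : nat -> R) : R :=
  match n with O => 0 | S k => Rsum k f + f k end.

(* ---------- N x N complex matrices and vectors in C^N ----------
   A matrix is a function of the indices; only entries with indices < N
   are meaningful (all predicates below only look at those). *)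
Definition Mat := nat -> nat -> C.
Definition Vec := nat -> C.

Definition Mmul (N : nat) (A B : Mat) : Mat :=
  fun i j => Csum N (fun k => Cmul (A i k) (B k j)).
Definition Madj (A : Mat) : Mat := fun i j => Cconj (A j i).
Definition Mid : Mat := fun i j => if Nat.eqb i j then C1 else C0.
Definition Mscale (c : C) (A : Mat) : Mat := fun i j => Cmul c (A i j).
Definition Mvec (N : nat) (A : Mat) (v : Vec) : Vec :=
  fun i => Csum N (fun k => Cmul (A i k) (v k)).

Definition selfadj (N : nat) (A : Mat) : Prop :=
  forall i j, (i < N)%nat -> (j < N)%nat -> A i j = Cconj (A j i).
Definition Mzero (N : nat) (A : Mat) : Prop :=
  forall i j, (i < N)%nat -> (j < N)%nat -> A i j = C0.

Definition vnorm (N : nat) (v : Vec) : R := sqrt (Rsum N (fun i => Cnorm2 (v i))).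

(* operator norm ||A|| = sup { |A v| : |v| <= 1 } (the least upper bound,
   chosen by classical choice; it exists since the set is nonempty and bounded) *)
Definition opnorm (N : nat) (A : Mat) : R :=
  epsilon (inhabits 0)
    (fun c => is_lub (fun r => exists v : Vec, vnorm N v <= 1 /\ r = vnorm N (Mvec N A v)) c).

Definition Mcontinuous (N : nat) (H : R -> Mat) : Prop :=
  forall i j, (i < N)%nat -> (j < N)%nat ->
    continuity (fun t => Re (H t i j)) /\ continuity (fun t => Im (H t i j)).

(* U t = U_C(t,0):  d/dt U(t) = -i H(t) U(t),  U(0) = 1 *)
Definition propagator0 (N : nat) (H : R -> Mat) (U : R -> Mat) : Prop :=
  (forall i j, (i < N)%nat -> (j < N)%nat -> U 0 i j = Mid i j) /\
  (forall t i j, (i < N)%nat -> (j < N)%nat ->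
     derivable_pt_lim (fun s => Re (U s i j)) t
       (Re (Mscale Cminus_i (Mmul N (H t) (U t)) i j)) /\
     derivable_pt_lim (fun s => Im (U s i j)) t
       (Im (Mscale Cminus_i (Mmul N (H t) (U t)) i j))).

Definition Mintegral_zero (N : nat) (W : R -> Mat) (a b : R) : Prop :=
  forall i j, (i < N)%nat -> (j < N)%nat ->
    (exists pr : Riemann_integrable (fun t => Re (W t i j)) a b, RiemannInt pr = 0) /\
    (exists pr : Riemann_integrable (fun t => Im (W t i j)) a b, RiemannInt pr = 0).

(* Let [W t = U t Q (U t)^*] and [phi t = Re tr (Q W t)]. Then [phi 0 = |Q|_F^2 > 0], while
   the decoupling condition says that [phi] integrates to [0] over [[0, T]]. The Heisenberg
   equation [W' = -i [H, W]] gives [phi' = Im tr (Q H W) - Im tr (W H Q)], hence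
   [|phi'| <= 2 |H| |Q|_F |W|_F = 2 |H| |Q|_F^2], as conjugation by the unitary [U t] preserves
   the Frobenius norm. So [phi >= |Q|_F^2 (1 - 2 int_0^T |H|)] on [[0, T]], and as [phi] has
   integral [0] this lower bound is not positive. *)

From Stdlib Require Import Reals Lra Lia ClassicalEpsilon FunctionalExtensionality Classical.
Open Scope R_scope.

Lemma C_ext (a b : C) : Re a = Re b -> Im a = Im b -> a = b.
Proof. destruct a, b; simpl; intros; subst; reflexivity. Qed.

Ltac Ceq := apply C_ext; simpl; ring.

Lemma Cnorm2_ge0 z : 0 <= Cnorm2 z.
Proof. unfold Cnorm2; nra. Qed.

Lemma Cnorm2_gt0 z : z <> C0 -> 0 < Cnorm2 z.
Proof.
  intros Hz. destruct (Rle_lt_or_eq_dec 0 _ (Cnorm2_ge0 z)) as [|E]; [assumption|].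
  exfalso; apply Hz. unfold Cnorm2 in E. apply C_ext; simpl; nra.
Qed.

Lemma Cnorm2_conj z : Cnorm2 (Cconj z) = Cnorm2 z.
Proof. unfold Cnorm2; simpl; ring. Qed.

Lemma Csum_ext n f g : (forall k, (k < n)%nat -> f k = g k) -> Csum n f = Csum n g.
Proof.
  induction n as [|n IH]; intros E; simpl; [reflexivity|].
  rewrite IH, E by (lia || (intros; apply E; lia)). reflexivity.
Qed.

Lemma Csum_add n f g : Csum n (fun k => Cadd (f k) (g k)) = Cadd (Csum n f) (Csum n g).
Proof. induction n as [|n IH]; simpl; [Ceq|]. rewrite IH. Ceq. Qed.

Lemma Csum_mul_l n c f : Cmul c (Csum n f) = Csum n (fun k => Cmul c (f k)).
Proof. induction n as [|n IH]; simpl; [Ceq|]. rewrite <- IH. Ceq. Qed.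

Lemma Csum_mul_r n c f : Cmul (Csum n f) c = Csum n (fun k => Cmul (f k) c).
Proof. induction n as [|n IH]; simpl; [Ceq|]. rewrite <- IH. Ceq. Qed.

Lemma Csum_conj n f : Cconj (Csum n f) = Csum n (fun k => Cconj (f k)).
Proof. induction n as [|n IH]; simpl; [Ceq|]. rewrite <- IH. Ceq. Qed.

Lemma Csum_swap n m (f : nat -> nat -> C) :
  Csum n (fun i => Csum m (f i)) = Csum m (fun j => Csum n (fun i => f i j)).
Proof.
  induction n as [|n IH]; simpl.
  - induction m as [|m IHm]; simpl; [reflexivity|]. rewrite <- IHm. Ceq.
  - rewrite IH, <- Csum_add. reflexivity.
Qed.

Lemma Re_Csum n f : Re (Csum n f) = Rsum n (fun k => Re (f k)).
Proof. induction n as [|n IH]; simpl; congruence. Qed.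

Lemma Im_Csum n f : Im (Csum n f) = Rsum n (fun k => Im (f k)).
Proof. induction n as [|n IH]; simpl; congruence. Qed.

Lemma Rsum_ext n f g : (forall k, (k < n)%nat -> f k = g k) -> Rsum n f = Rsum n g.
Proof.
  induction n as [|n IH]; intros E; simpl; [reflexivity|].
  rewrite IH, E by (lia || (intros; apply E; lia)). reflexivity.
Qed.

Lemma Rsum_add n f g : Rsum n (fun k => f k + g k) = Rsum n f + Rsum n g.
Proof. induction n as [|n IH]; simpl; [ring|]. rewrite IH. ring. Qed.

Lemma Rsum_scal n c f : Rsum n (fun k => c * f k) = c * Rsum n f.
Proof. induction n as [|n IH]; simpl; [ring|]. rewrite IH. ring. Qed.

Lemma Rsum_le n f g : (forall k, (k < n)%nat -> f k <= g k) -> Rsum n f <= Rsum n g.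
Proof.
  induction n as [|n IH]; intros Hfg; simpl; [lra|].
  apply Rplus_le_compat; [apply IH; intros; apply Hfg|apply Hfg]; lia.
Qed.

Lemma Rsum_ge0 n f : (forall k, (k < n)%nat -> 0 <= f k) -> 0 <= Rsum n f.
Proof.
  induction n as [|n IH]; intros Hf; simpl; [lra|].
  apply Rplus_le_le_0_compat; [apply IH; intros; apply Hf|apply Hf]; lia.
Qed.

Lemma Rsum_ge_term n f k :
  (forall j, (j < n)%nat -> 0 <= f j) -> (k < n)%nat -> f k <= Rsum n f.
Proof.
  induction n as [|n IH]; intros Hf Hk; [lia|]. simpl.
  assert (0 <= Rsum n f) by (apply Rsum_ge0; intros; apply Hf; lia).
  destruct (Nat.eq_dec k n) as [->|Hkn]; [lra|].
  assert (f k <= Rsum n f) by (apply IH; [intros; apply Hf|]; lia).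
  assert (0 <= f n) by (apply Hf; lia). lra.
Qed.

Lemma Rsum_abs n f : Rabs (Rsum n f) <= Rsum n (fun k => Rabs (f k)).
Proof.
  induction n as [|n IH]; simpl; [rewrite Rabs_R0; lra|].
  eapply Rle_trans; [apply Rabs_triang|lra].
Qed.

Lemma Rsum_swap n m (f : nat -> nat -> R) :
  Rsum n (fun i => Rsum m (f i)) = Rsum m (fun j => Rsum n (fun i => f i j)).
Proof.
  induction n as [|n IH]; simpl.
  - induction m as [|m IHm]; simpl; [reflexivity|]. rewrite <- IHm. ring.
  - rewrite IH, <- Rsum_add. reflexivity.
Qed.

Definition Meq (N : nat) (A B : Mat) : Prop :=
  forall i j, (i < N)%nat -> (j < N)%nat -> A i j = B i j.
Definition Madd (A B : Mat) : Mat := fun i j => Cadd (A i j) (B i j).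
Definition Mtr (N : nat) (A : Mat) : C := Csum N (fun i => A i i).
Definition nsq (N : nat) (v : Vec) : R := Rsum N (fun i => Cnorm2 (v i)).
Definition Fro (N : nat) (A : Mat) : R := Rsum N (fun i => nsq N (A i)).
Definition dot (N : nat) (a b : Vec) : C := Csum N (fun i => Cmul (Cconj (a i)) (b i)).

Lemma Csum_C0 n : Csum n (fun _ => C0) = C0.
Proof. induction n as [|n IH]; simpl; [reflexivity|]. rewrite IH. Ceq. Qed.

Lemma Csum_Mid_l n k f : (k < n)%nat -> Csum n (fun l => Cmul (Mid k l) (f l)) = f k.
Proof.
  induction n as [|n IH]; intros Hk; [lia|]. simpl.
  destruct (Nat.eq_dec k n) as [->|Hkn].
  - rewrite (Csum_ext _ _ (fun _ => C0)).
    + unfold Mid; rewrite Nat.eqb_refl, Csum_C0. Ceq.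
    + intros l Hl. unfold Mid. destruct (Nat.eqb_spec n l); [lia|]. Ceq.
  - rewrite IH by lia. unfold Mid. destruct (Nat.eqb_spec k n); [lia|]. Ceq.
Qed.

Lemma Csum_Mid_r n k f : (k < n)%nat -> Csum n (fun l => Cmul (f l) (Mid l k)) = f k.
Proof.
  intros Hk. rewrite <- (Csum_Mid_l n k f Hk). apply Csum_ext; intros l _.
  unfold Mid. rewrite Nat.eqb_sym. Ceq.
Qed.

Lemma Mmul_assoc N A B D : Mmul N (Mmul N A B) D = Mmul N A (Mmul N B D).
Proof.
  extensionality i; extensionality j. unfold Mmul.
  transitivity (Csum N (fun l => Csum N (fun k => Cmul (A i k) (Cmul (B k l) (D l j))))).
  - apply Csum_ext; intros. rewrite Csum_mul_r. apply Csum_ext; intros. Ceq.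
  - rewrite Csum_swap. apply Csum_ext; intros. rewrite Csum_mul_l. reflexivity.
Qed.

Lemma Mvec_Mmul N A B x : Mvec N (Mmul N A B) x = Mvec N A (Mvec N B x).
Proof.
  extensionality i. unfold Mvec, Mmul.
  transitivity (Csum N (fun l => Csum N (fun k => Cmul (A i k) (Cmul (B k l) (x l))))).
  - apply Csum_ext; intros. rewrite Csum_mul_r. apply Csum_ext; intros. Ceq.
  - rewrite Csum_swap. apply Csum_ext; intros. rewrite Csum_mul_l. reflexivity.
Qed.

Lemma Mmul_scale_l N c A B : Mmul N (Mscale c A) B = Mscale c (Mmul N A B).
Proof.
  extensionality i; extensionality j. unfold Mmul, Mscale.
  rewrite Csum_mul_l. apply Csum_ext; intros; Ceq.
Qed.

Lemma Mmul_scale_r N c A B : Mmul N A (Mscale c B) = Mscale c (Mmul N A B).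
Proof.
  extensionality i; extensionality j. unfold Mmul, Mscale.
  rewrite Csum_mul_l. apply Csum_ext; intros; Ceq.
Qed.

Lemma Mmul_Madd_r N A B D : Mmul N A (Madd B D) = Madd (Mmul N A B) (Mmul N A D).
Proof.
  extensionality i; extensionality j. unfold Mmul, Madd.
  rewrite <- Csum_add. apply Csum_ext; intros; Ceq.
Qed.

Lemma Madj_Mmul N A B : Madj (Mmul N A B) = Mmul N (Madj B) (Madj A).
Proof.
  extensionality i; extensionality j. unfold Mmul, Madj.
  rewrite Csum_conj. apply Csum_ext; intros; Ceq.
Qed.

Lemma Madj_scale c A : Madj (Mscale c A) = Mscale (Cconj c) (Madj A).
Proof. extensionality i; extensionality j. Ceq. Qed.

Lemma MadjK A : Madj (Madj A) = A.
Proof. extensionality i; extensionality j. Ceq. Qed.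

Lemma Mmul_Meq N A A' B B' :
  Meq N A A' -> Meq N B B' -> Meq N (Mmul N A B) (Mmul N A' B').
Proof.
  intros HA HB i j Hi Hj. unfold Mmul. apply Csum_ext; intros.
  rewrite HA, HB by assumption. reflexivity.
Qed.

Lemma Madj_Meq N A B : Meq N A B -> Meq N (Madj A) (Madj B).
Proof. intros HAB i j Hi Hj. unfold Madj. rewrite HAB by assumption. reflexivity. Qed.

Lemma Meq_refl N A : Meq N A A.
Proof. intros i j _ _. reflexivity. Qed.

Lemma Meq_trans N A B D : Meq N A B -> Meq N B D -> Meq N A D.
Proof. intros HAB HBD i j Hi Hj. rewrite HAB by assumption. apply HBD; assumption. Qed.

Lemma Madj_selfadj N A : selfadj N A -> Meq N (Madj A) A.
Proof. intros HA i j Hi Hj. unfold Madj. rewrite HA by assumption. Ceq. Qed.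

Lemma Madj_Mid : Madj Mid = Mid.
Proof.
  extensionality i; extensionality j. unfold Madj, Mid.
  destruct (Nat.eqb_spec j i), (Nat.eqb_spec i j); try Ceq; congruence.
Qed.

Lemma Mmul1l N A : Meq N (Mmul N Mid A) A.
Proof. intros i j Hi _. exact (Csum_Mid_l N i (fun l => A l j) Hi). Qed.

Lemma Mmul1r N A : Meq N (Mmul N A Mid) A.
Proof. intros i j _ Hj. exact (Csum_Mid_r N j (A i) Hj). Qed.

Lemma Mtr_Meq N A B : Meq N A B -> Mtr N A = Mtr N B.
Proof. intros HAB. apply Csum_ext; intros. apply HAB; assumption. Qed.

Lemma Mtr_add N A B : Mtr N (Madd A B) = Cadd (Mtr N A) (Mtr N B).
Proof. apply Csum_add. Qed.

Lemma Mtr_scale N c A : Mtr N (Mscale c A) = Cmul c (Mtr N A).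
Proof. unfold Mtr. rewrite Csum_mul_l. reflexivity. Qed.

Lemma Mtr_mulC N A B : Mtr N (Mmul N A B) = Mtr N (Mmul N B A).
Proof. unfold Mtr, Mmul. rewrite Csum_swap. do 2 (apply Csum_ext; intros). Ceq. Qed.

Lemma nsq_ge0 N v : 0 <= nsq N v.
Proof. apply Rsum_ge0; intros; apply Cnorm2_ge0. Qed.

Lemma Fro_ge0 N A : 0 <= Fro N A.
Proof. apply Rsum_ge0; intros; apply nsq_ge0. Qed.

Lemma Fro_gt0 N A : ~ Mzero N A -> 0 < Fro N A.
Proof.
  intros HA. apply NNPP; intros Hle. apply HA; intros i j Hi Hj.
  apply NNPP; intros Hij. apply Hle.
  apply Rlt_le_trans with (nsq N (A i));
    [|apply (Rsum_ge_term N (fun i => nsq N (A i))); auto using nsq_ge0].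
  apply Rlt_le_trans with (Cnorm2 (A i j)); [now apply Cnorm2_gt0|].
  apply (Rsum_ge_term N (fun j => Cnorm2 (A i j))); auto using Cnorm2_ge0.
Qed.

Lemma Fro_cols N A : Fro N A = Rsum N (fun j => nsq N (fun i => A i j)).
Proof. apply Rsum_swap. Qed.

Lemma Fro_Madj N A : Fro N (Madj A) = Fro N A.
Proof.
  rewrite Fro_cols. apply Rsum_ext; intros. apply Rsum_ext; intros. apply Cnorm2_conj.
Qed.

Lemma nsq_dot N v : nsq N v = Re (dot N v v).
Proof. unfold nsq, dot. rewrite Re_Csum. apply Rsum_ext; intros. unfold Cnorm2; simpl; ring. Qed.

Lemma dot_Mvec_l N A x y : dot N (Mvec N A x) y = dot N x (Mvec N (Madj A) y).
Proof.
  unfold dot, Mvec, Madj.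
  transitivity (Csum N (fun i => Csum N (fun k => Cmul (Cconj (x k)) (Cmul (Cconj (A i k)) (y i))))).
  - apply Csum_ext; intros. rewrite Csum_conj, Csum_mul_r. apply Csum_ext; intros. Ceq.
  - rewrite Csum_swap. apply Csum_ext; intros. rewrite Csum_mul_l. reflexivity.
Qed.

Section Unitary.
Variables (N : nat) (U : Mat).
Hypothesis U_unitary : Meq N (Mmul N (Madj U) U) Mid.

Lemma nsq_Mvec_unitary x : nsq N (Mvec N U x) = nsq N x.
Proof.
  rewrite !nsq_dot, dot_Mvec_l, <- Mvec_Mmul. f_equal.
  unfold dot. apply Csum_ext; intros k Hk. f_equal. unfold Mvec.
  rewrite (Csum_ext _ _ (fun l => Cmul (Mid k l) (x l))) by (intros; rewrite U_unitary; auto).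
  apply Csum_Mid_l; assumption.
Qed.

Lemma Fro_mul_unitary_l A : Fro N (Mmul N U A) = Fro N A.
Proof.
  rewrite !Fro_cols. apply Rsum_ext; intros j _.
  apply (nsq_Mvec_unitary (fun k => A k j)).
Qed.

Lemma Fro_conj_unitary A : Fro N (Mmul N (Mmul N U A) (Madj U)) = Fro N A.
Proof.
  rewrite <- Fro_Madj, Madj_Mmul, MadjK, Fro_mul_unitary_l, Fro_Madj.
  apply Fro_mul_unitary_l.
Qed.

End Unitary.

Lemma Rle_of_forall_le_add_mul x y k :
  0 <= k -> (forall e, 0 < e -> x <= y + k * e) -> x <= y.
Proof.
  intros Hk Hx. apply Rle_plus_epsilon; intros eps He.
  assert (Hk1 : 0 < k + 1) by lra.
  specialize (Hx (eps / (k + 1)) ltac:(apply Rdiv_lt_0_compat; lra)).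
  enough (k * (eps / (k + 1)) <= eps) by lra.
  apply Rmult_le_reg_r with (k + 1); [lra|].
  field_simplify; [nra|lra].
Qed.

Lemma sq_le_of_sqrt_le x y : 0 <= x -> sqrt x <= y -> x <= y * y.
Proof.
  intros Hx Hxy. rewrite <- (sqrt_sqrt x Hx).
  pose proof (sqrt_pos x). apply Rmult_le_compat; lra.
Qed.

Lemma sq_le_of_Rabs_le x b : Rabs x <= b -> x * x <= b * b.
Proof.
  intros Hx. pose proof (Rabs_pos x).
  assert (E : x * x = Rabs x * Rabs x) by (rewrite <- Rabs_mult, Rabs_pos_eq; nra).
  rewrite E. apply Rmult_le_compat; lra.
Qed.

(** * The operator norm *)

Definition opnorm_set (N : nat) (A : Mat) (r : R) : Prop :=
  exists v : Vec, vnorm N v <= 1 /\ r = vnorm N (Mvec N A v).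

Lemma vnorm_le1 N v : vnorm N v <= 1 <-> nsq N v <= 1.
Proof.
  split; intros Hv.
  - replace 1 with (1 * 1) by ring. apply sq_le_of_sqrt_le; [apply nsq_ge0|exact Hv].
  - rewrite <- sqrt_1. apply sqrt_le_1_alt; exact Hv.
Qed.

Lemma Rabs_lincomb_le a b x y :
  Rabs x <= 1 -> Rabs y <= 1 -> Rabs (a * x + b * y) <= Rabs a + Rabs b.
Proof.
  intros Hx Hy. eapply Rle_trans; [apply Rabs_triang|]. rewrite !Rabs_mult.
  pose proof (Rabs_pos a); pose proof (Rabs_pos b). nra.
Qed.

Lemma opnorm_set_bounded N A : bound (opnorm_set N A).
Proof.
  set (b := fun i => Rsum N (fun k => Rabs (Re (A i k)) + Rabs (Im (A i k)))).
  exists (sqrt (Rsum N (fun i => 2 * (b i * b i)))).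
  intros r [v [Hv ->]]. apply sqrt_le_1_alt. apply vnorm_le1 in Hv.
  assert (Hvk : forall k, (k < N)%nat -> Rabs (Re (v k)) <= 1 /\ Rabs (Im (v k)) <= 1).
  { intros k Hk. assert (Cnorm2 (v k) <= 1).
    { eapply Rle_trans; [|exact Hv].
      apply (Rsum_ge_term N (fun i => Cnorm2 (v i))); auto using Cnorm2_ge0. }
    unfold Cnorm2 in *. split; apply Rabs_le; nra. }
  apply Rsum_le; intros i Hi. unfold Mvec, Cnorm2. rewrite Re_Csum, Im_Csum.
  assert (HRe : Rabs (Rsum N (fun k => Re (Cmul (A i k) (v k)))) <= b i).
  { eapply Rle_trans; [apply Rsum_abs|]. apply Rsum_le; intros k Hk. simpl.
    rewrite <- (Rabs_Ropp (Im (A i k))). destruct (Hvk k Hk).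
    replace (Re (A i k) * Re (v k) - Im (A i k) * Im (v k))
      with (Re (A i k) * Re (v k) + - Im (A i k) * Im (v k)) by ring.
    apply Rabs_lincomb_le; assumption. }
  assert (HIm : Rabs (Rsum N (fun k => Im (Cmul (A i k) (v k)))) <= b i).
  { eapply Rle_trans; [apply Rsum_abs|]. apply Rsum_le; intros k Hk. simpl.
    destruct (Hvk k Hk). apply Rabs_lincomb_le; assumption. }
  apply sq_le_of_Rabs_le in HRe, HIm. lra.
Qed.

Lemma opnorm_set_0 N A : opnorm_set N A 0.
Proof.
  exists (fun _ => C0).
  assert (E : forall v, (forall k, v k = C0) -> vnorm N v = 0).
  { intros v Hv. unfold vnorm. rewrite <- sqrt_0. f_equal.
    induction N as [|n IH]; simpl; [reflexivity|]. rewrite IH, Hv. unfold Cnorm2; simpl; ring. }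
  split.
  - rewrite E by reflexivity. lra.
  - symmetry. apply E. intros k. unfold Mvec. rewrite (Csum_ext _ _ (fun _ => C0)).
    + apply Csum_C0.
    + intros; Ceq.
Qed.

Lemma opnorm_is_lub N A : is_lub (opnorm_set N A) (opnorm N A).
Proof.
  unfold opnorm. apply epsilon_spec.
  destruct (completeness _ (opnorm_set_bounded N A)) as [m Hm].
  - exists 0. apply opnorm_set_0.
  - exists m. exact Hm.
Qed.

Lemma opnorm_ge0 N A : 0 <= opnorm N A.
Proof. apply (proj1 (opnorm_is_lub N A)). apply opnorm_set_0. Qed.

Lemma nsq_scale N r v : nsq N (fun k => Cmul (mkC r 0) (v k)) = r * r * nsq N v.
Proof. unfold nsq. rewrite <- Rsum_scal. apply Rsum_ext; intros. unfold Cnorm2; simpl; ring. Qed.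

Lemma Mvec_scale N A c v : Mvec N A (fun k => Cmul c (v k)) = fun i => Cmul c (Mvec N A v i).
Proof. extensionality i. unfold Mvec. rewrite Csum_mul_l. apply Csum_ext; intros; Ceq. Qed.

(* Apply the defining bound to [v / sqrt (|v|^2 + e)], which lies in the unit ball. *)
Lemma nsq_Mvec_le N A v : nsq N (Mvec N A v) <= opnorm N A * opnorm N A * nsq N v.
Proof.
  set (s := nsq N v). set (op := opnorm N A).
  assert (Hs : 0 <= s) by apply nsq_ge0.
  apply (Rle_of_forall_le_add_mul _ _ (op * op)); [nra|]. intros e He.
  set (r := / sqrt (s + e)).
  assert (Hse : 0 < sqrt (s + e)) by (apply sqrt_lt_R0; lra).
  assert (Hr2 : r * r * (s + e) = 1).
  { unfold r. rewrite <- Rinv_mult, sqrt_sqrt by lra. field. lra. }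
  assert (Hr : 0 < r) by (apply Rinv_0_lt_compat; exact Hse).
  assert (Hlub : r * r * nsq N (Mvec N A v) <= op * op).
  { rewrite <- nsq_scale, <- Mvec_scale. apply sq_le_of_sqrt_le; [apply nsq_ge0|].
    apply (proj1 (opnorm_is_lub N A)). eexists; split; [|reflexivity].
    apply vnorm_le1. rewrite nsq_scale. fold s.
    assert (0 <= r * r * e) by (apply Rmult_le_pos; nra).
    replace (r * r * s) with (1 - r * r * e) by (rewrite <- Hr2; ring). lra. }
  set (X := nsq N (Mvec N A v)) in *.
  replace X with (r * r * X * (s + e))
    by (transitivity (X * (r * r * (s + e))); [ring|rewrite Hr2; ring]). apply Rle_trans with (op * op * (s + e)); [|lra].
  apply Rmult_le_compat_r; lra.
Qed.

(** * A trace inequality *)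

Lemma Rabs_mul_le_amgm l x y : 0 < l -> Rabs (x * y) <= (l * (x * x) + y * y / l) / 2.
Proof.
  intros Hl.
  assert (Em : (l * (x * x) + y * y / l) / 2 - x * y = (l * x - y) * (l * x - y) / (2 * l))
    by (field; lra).
  assert (Ep : (l * (x * x) + y * y / l) / 2 + x * y = (l * x + y) * (l * x + y) / (2 * l))
    by (field; lra).
  assert (0 <= (l * x - y) * (l * x - y) / (2 * l)) by (apply Rmult_le_pos; [apply Rle_0_sqr|apply Rlt_le, Rinv_0_lt_compat; lra]).
  assert (0 <= (l * x + y) * (l * x + y) / (2 * l)) by (apply Rmult_le_pos; [apply Rle_0_sqr|apply Rlt_le, Rinv_0_lt_compat; lra]).
  apply Rabs_le; lra.
Qed.

Lemma Rabs_Im_sum_mul_le N l a y : 0 < l ->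
  Rabs (Im (Csum N (fun k => Cmul (a k) (y k)))) <= (l * nsq N a + nsq N y / l) / 2.
Proof.
  intros Hl. rewrite Im_Csum. eapply Rle_trans; [apply Rsum_abs|].
  replace ((l * nsq N a + nsq N y / l) / 2)
    with (Rsum N (fun k => (l * Cnorm2 (a k) + Cnorm2 (y k) / l) / 2)).
  2:{ unfold nsq. clear - Hl. induction N as [|n IH]; simpl; [field|rewrite IH; field]; lra. }
  apply Rsum_le; intros k _. simpl.
  pose proof (Rabs_mul_le_amgm l (Re (a k)) (Im (y k)) Hl).
  pose proof (Rabs_mul_le_amgm l (Im (a k)) (Re (y k)) Hl).
  eapply Rle_trans; [apply Rabs_triang|]. unfold Cnorm2.
  replace ((l * (Re (a k) * Re (a k) + Im (a k) * Im (a k))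
            + (Re (y k) * Re (y k) + Im (y k) * Im (y k)) / l) / 2)
    with ((l * (Re (a k) * Re (a k)) + Im (y k) * Im (y k) / l) / 2
          + (l * (Im (a k) * Im (a k)) + Re (y k) * Re (y k) / l) / 2) by (field; lra).
  lra.
Qed.

Lemma Rabs_Im_sum_mul_Mvec_le N l Hm a b : 0 < l -> opnorm N Hm <= l ->
  Rabs (Im (Csum N (fun k => Cmul (a k) (Mvec N Hm b k)))) <= l * (nsq N a + nsq N b) / 2.
Proof.
  intros Hl Hh. eapply Rle_trans; [apply Rabs_Im_sum_mul_le; exact Hl|].
  pose proof (nsq_Mvec_le N Hm b). pose proof (opnorm_ge0 N Hm). pose proof (nsq_ge0 N b).
  enough (nsq N (Mvec N Hm b) / l <= l * nsq N b) by lra.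
  apply Rmult_le_reg_r with l; [exact Hl|]. unfold Rdiv.
  rewrite Rmult_assoc, Rinv_l by lra.
  assert (opnorm N Hm * opnorm N Hm <= l * l) by nra.
  assert (0 <= (l * l - opnorm N Hm * opnorm N Hm) * nsq N b) by (apply Rmult_le_pos; lra).
  nra.
Qed.

Lemma Rabs_Im_Mtr_mul_le N l Hm A B : 0 < l -> opnorm N Hm <= l ->
  Rabs (Im (Mtr N (Mmul N A (Mmul N Hm B)))) <= l * (Fro N A + Fro N B) / 2.
Proof.
  intros Hl Hh. unfold Mtr. rewrite Im_Csum. eapply Rle_trans; [apply Rsum_abs|].
  rewrite Fro_cols with (A := B).
  replace (l * (Fro N A + Rsum N (fun j => nsq N (fun i => B i j))) / 2)
    with (Rsum N (fun i => l * (nsq N (A i) + nsq N (fun k => B k i)) / 2)).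
  2:{ unfold Fro. rewrite <- Rsum_add.
      replace (l * Rsum N (fun k => nsq N (A k) + nsq N (fun i => B i k)) / 2)
        with ((l / 2) * Rsum N (fun k => nsq N (A k) + nsq N (fun i => B i k))) by field.
      rewrite <- Rsum_scal. apply Rsum_ext; intros. field. }
  apply Rsum_le; intros i _.
  exact (Rabs_Im_sum_mul_Mvec_le N l Hm (A i) (fun k => B k i) Hl Hh).
Qed.

Definition Ccont (f : R -> C) : Prop :=
  continuity (fun s => Re (f s)) /\ continuity (fun s => Im (f s)).

Definition Cdiff (f f' : R -> C) : Prop :=
  (forall t, derivable_pt_lim (fun s => Re (f s)) t (Re (f' t)) /\
             derivable_pt_lim (fun s => Im (f s)) t (Im (f' t))) /\ Ccont f'.

Definition Mdiff (N : nat) (A A' : R -> Mat) : Prop :=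
  forall i j, (i < N)%nat -> (j < N)%nat -> Cdiff (fun t => A t i j) (fun t => A' t i j).

Lemma continuity_of_derivable (f f' : R -> R) :
  (forall t, derivable_pt_lim f t (f' t)) -> continuity f.
Proof. intros Hf x. apply derivable_continuous_pt. exists (f' x). apply Hf. Qed.

Lemma Cdiff_cont f f' : Cdiff f f' -> Ccont f.
Proof. intros [Hf _]. split; eapply continuity_of_derivable; intros t; apply Hf. Qed.

Lemma Ccont_const c : Ccont (fun _ => c).
Proof. split; apply continuity_const; intros x y; reflexivity. Qed.

Lemma Ccont_add f g : Ccont f -> Ccont g -> Ccont (fun s => Cadd (f s) (g s)).
Proof. intros [] []; split; apply continuity_plus; assumption. Qed.

Lemma Ccont_mul f g : Ccont f -> Ccont g -> Ccont (fun s => Cmul (f s) (g s)).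
Proof.
  intros [] []; split; simpl.
  - apply continuity_minus; apply continuity_mult; assumption.
  - apply continuity_plus; apply continuity_mult; assumption.
Qed.

Lemma Ccont_conj f : Ccont f -> Ccont (fun s => Cconj (f s)).
Proof. intros []; split; simpl; [|apply continuity_opp]; assumption. Qed.

Lemma Ccont_sum n (f : nat -> R -> C) :
  (forall k, (k < n)%nat -> Ccont (f k)) -> Ccont (fun s => Csum n (fun k => f k s)).
Proof.
  induction n as [|n IH]; intros Hf; simpl; [apply Ccont_const|].
  apply Ccont_add; [apply IH; intros|]; apply Hf; lia.
Qed.

Lemma Cdiff_const c : Cdiff (fun _ => c) (fun _ => C0).
Proof.
  split; [|apply Ccont_const]. intros t; split;
  [apply (derivable_pt_lim_const (Re c))|apply (derivable_pt_lim_const (Im c))].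
Qed.

Lemma Cdiff_add f f' g g' : Cdiff f f' -> Cdiff g g' ->
  Cdiff (fun s => Cadd (f s) (g s)) (fun s => Cadd (f' s) (g' s)).
Proof.
  intros [Hf Cf] [Hg Cg]. split; [|apply Ccont_add; assumption].
  intros t; destruct (Hf t), (Hg t); split; apply derivable_pt_lim_plus; assumption.
Qed.

Lemma Cdiff_mul f f' g g' : Cdiff f f' -> Cdiff g g' ->
  Cdiff (fun s => Cmul (f s) (g s)) (fun s => Cadd (Cmul (f' s) (g s)) (Cmul (f s) (g' s))).
Proof.
  intros Df Dg. pose proof (Cdiff_cont _ _ Df). pose proof (Cdiff_cont _ _ Dg).
  destruct Df as [Hf Cf], Dg as [Hg Cg]. split.
  - intros t; destruct (Hf t) as [HRf HIf], (Hg t) as [HRg HIg]; split; simpl.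
    + replace (_ + _) with (Re (f' t) * Re (g t) + Re (f t) * Re (g' t)
                            - (Im (f' t) * Im (g t) + Im (f t) * Im (g' t))) by ring.
      apply derivable_pt_lim_minus; apply derivable_pt_lim_mult; assumption.
    + replace (_ + _) with (Re (f' t) * Im (g t) + Re (f t) * Im (g' t)
                            + (Im (f' t) * Re (g t) + Im (f t) * Re (g' t))) by ring.
      apply derivable_pt_lim_plus; apply derivable_pt_lim_mult; assumption.
  - apply Ccont_add; apply Ccont_mul; assumption.
Qed.

Lemma Cdiff_conj f f' : Cdiff f f' -> Cdiff (fun s => Cconj (f s)) (fun s => Cconj (f' s)).
Proof.
  intros [Hf Cf]. split; [|apply Ccont_conj; assumption].
  intros t; destruct (Hf t); split; simpl; [|apply derivable_pt_lim_opp]; assumption.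
Qed.

Lemma Cdiff_ext f f' g' : Cdiff f f' -> (forall s, f' s = g' s) -> Cdiff f g'.
Proof. intros Hf E. replace g' with f' by (extensionality s; apply E). exact Hf. Qed.

Lemma Cdiff_mul_const_l c g g' : Cdiff g g' ->
  Cdiff (fun s => Cmul c (g s)) (fun s => Cmul c (g' s)).
Proof.
  intros Dg. eapply Cdiff_ext; [apply Cdiff_mul; [apply Cdiff_const|exact Dg]|].
  intros; simpl; Ceq.
Qed.

Lemma Cdiff_mul_const_r c g g' : Cdiff g g' ->
  Cdiff (fun s => Cmul (g s) c) (fun s => Cmul (g' s) c).
Proof.
  intros Dg. eapply Cdiff_ext; [apply Cdiff_mul; [exact Dg|apply Cdiff_const]|].
  intros; simpl; Ceq.
Qed.

Lemma Cdiff_sum n (f f' : nat -> R -> C) : (forall k, (k < n)%nat -> Cdiff (f k) (f' k)) ->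
  Cdiff (fun s => Csum n (fun k => f k s)) (fun s => Csum n (fun k => f' k s)).
Proof.
  induction n as [|n IH]; intros Hf; simpl; [apply Cdiff_const|].
  apply Cdiff_add; [apply IH; intros|]; apply Hf; lia.
Qed.

Lemma const_of_deriv_0 (f : R -> R) : (forall t, derivable_pt_lim f t 0) -> forall t, f t = f 0.
Proof.
  intros Hf t. destruct (Rtotal_order t 0) as [Hlt|[->|Hgt]]; [|reflexivity|].
  - destruct (MVT_cor2 f (fun _ => 0) t 0 Hlt) as [c [Hc _]]; [intros; apply Hf|]. lra.
  - destruct (MVT_cor2 f (fun _ => 0) 0 t Hgt) as [c [Hc _]]; [intros; apply Hf|]. lra.
Qed.

Lemma Cdiff_0_const f : Cdiff f (fun _ => C0) -> forall t, f t = f 0.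
Proof.
  intros [Hf _] t. apply C_ext.
  - apply (const_of_deriv_0 (fun s => Re (f s))); intros s; apply (Hf s).
  - apply (const_of_deriv_0 (fun s => Im (f s))); intros s; apply (Hf s).
Qed.

Lemma Mdiff_mul N A A' B B' : Mdiff N A A' -> Mdiff N B B' ->
  Mdiff N (fun t => Mmul N (A t) (B t))
          (fun t => Madd (Mmul N (A' t) (B t)) (Mmul N (A t) (B' t))).
Proof.
  intros HA HB i j Hi Hj. eapply Cdiff_ext.
  - apply Cdiff_sum; intros k Hk. apply Cdiff_mul; [apply HA|apply HB]; assumption.
  - intros s. unfold Madd, Mmul. rewrite Csum_add. reflexivity.
Qed.

Lemma Mdiff_mul_const_r N A A' Q : Mdiff N A A' ->
  Mdiff N (fun t => Mmul N (A t) Q) (fun t => Mmul N (A' t) Q).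
Proof.
  intros HA i j Hi Hj. apply Cdiff_sum; intros k Hk.
  apply Cdiff_mul_const_r, HA; assumption.
Qed.

Lemma Mdiff_adj N A A' : Mdiff N A A' -> Mdiff N (fun t => Madj (A t)) (fun t => Madj (A' t)).
Proof. intros HA i j Hi Hj. apply Cdiff_conj, HA; assumption. Qed.

Lemma Mdiff_ext N A A' B' : Mdiff N A A' -> (forall t, Meq N (A' t) (B' t)) -> Mdiff N A B'.
Proof.
  intros HA E i j Hi Hj. destruct (HA i j Hi Hj) as [Hd Hc]. split.
  - intros t. rewrite <- (E t i j Hi Hj). apply Hd.
  - replace (fun t => B' t i j) with (fun t => A' t i j)
      by (extensionality t; apply E; assumption). exact Hc.
Qed.

Lemma Cdiff_Mtr_mul_l N Q A A' : Mdiff N A A' ->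
  Cdiff (fun t => Mtr N (Mmul N Q (A t))) (fun t => Mtr N (Mmul N Q (A' t))).
Proof.
  intros HA. apply Cdiff_sum; intros i Hi. apply Cdiff_sum; intros k Hk.
  apply Cdiff_mul_const_l, HA; assumption.
Qed.

Definition Rintegral_zero (a b : R) (f : R -> R) : Prop :=
  exists pr : Riemann_integrable f a b, RiemannInt pr = 0.

Definition Cintegral_zero (a b : R) (f : R -> C) : Prop :=
  Rintegral_zero a b (fun t => Re (f t)) /\ Rintegral_zero a b (fun t => Im (f t)).

Lemma Rintegral_zero_0 a b : Rintegral_zero a b (fun _ => 0).
Proof.
  exists (RiemannInt_P14 a b 0).
  pose proof (RiemannInt_P15 (RiemannInt_P14 a b 0)) as E. rewrite Rmult_0_l in E. exact E.
Qed.

Lemma Rintegral_zero_lin a b f g l : Rintegral_zero a b f -> Rintegral_zero a b g ->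
  Rintegral_zero a b (fun x => f x + l * g x).
Proof.
  intros [pf Ef] [pg Eg]. exists (RiemannInt_P10 l pf pg).
  rewrite (RiemannInt_P13 pf pg), Ef, Eg. ring.
Qed.

Lemma Rintegral_zero_ext a b f g : Rintegral_zero a b f -> (forall x, f x = g x) ->
  Rintegral_zero a b g.
Proof. intros Hf E. replace g with f by (extensionality x; apply E). exact Hf. Qed.

Lemma Cintegral_zero_sum a b n (f : nat -> R -> C) :
  (forall k, (k < n)%nat -> Cintegral_zero a b (f k)) ->
  Cintegral_zero a b (fun t => Csum n (fun k => f k t)).
Proof.
  induction n as [|n IH]; intros Hf; simpl; [split; apply Rintegral_zero_0|].
  destruct IH as [HRe HIm]; [intros; apply Hf; lia|].
  destruct (Hf n) as [HRn HIn]; [lia|].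
  split; eapply Rintegral_zero_ext.
  - apply (Rintegral_zero_lin _ _ _ _ 1 HRe HRn).
  - intros; simpl; ring.
  - apply (Rintegral_zero_lin _ _ _ _ 1 HIm HIn).
  - intros; simpl; ring.
Qed.

Lemma Cintegral_zero_mul_const_l a b c f : Cintegral_zero a b f ->
  Cintegral_zero a b (fun t => Cmul c (f t)).
Proof.
  intros [HRe HIm]. split; eapply Rintegral_zero_ext.
  - apply (Rintegral_zero_lin _ _ _ _ (- Im c) (Rintegral_zero_lin _ _ _ _ (Re c)
      (Rintegral_zero_0 a b) HRe) HIm).
  - intros; simpl; ring.
  - apply (Rintegral_zero_lin _ _ _ _ (Im c) (Rintegral_zero_lin _ _ _ _ (Re c)
      (Rintegral_zero_0 a b) HIm) HRe).
  - intros; simpl; ring.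
Qed.

Lemma Cintegral_zero_Mtr_mul_l N Q W a b : Mintegral_zero N W a b ->
  Cintegral_zero a b (fun t => Mtr N (Mmul N Q (W t))).
Proof.
  intros HW. apply Cintegral_zero_sum; intros i Hi. apply Cintegral_zero_sum; intros k Hk.
  apply Cintegral_zero_mul_const_l, HW; assumption.
Qed.

Lemma RiemannInt_ge_const f a b m (pr : Riemann_integrable f a b) :
  a <= b -> (forall x, a < x < b -> m <= f x) -> m * (b - a) <= RiemannInt pr.
Proof.
  intros Hab Hm. rewrite <- (RiemannInt_P15 (RiemannInt_P14 a b m)).
  apply RiemannInt_P19; assumption.
Qed.

Lemma RiemannInt_le_scal f g k a b (prf : Riemann_integrable f a b)
  (prg : Riemann_integrable g a b) :
  a <= b -> (forall x, a < x < b -> f x <= k * g x) -> RiemannInt prf <= k * RiemannInt prg.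
Proof.
  intros Hab Hfg.
  pose (pr := RiemannInt_P10 k (RiemannInt_P14 a b 0) prg).
  apply Rle_trans with (RiemannInt pr).
  - apply RiemannInt_P19; [assumption|]. intros x Hx. unfold fct_cte. rewrite Rplus_0_l. auto.
  - unfold pr. rewrite (RiemannInt_P13 (RiemannInt_P14 a b 0) prg), RiemannInt_P15. lra.
Qed.

Lemma le_of_deriv_ge0 (g g' : R -> R) a b : a <= b ->
  (forall c, a <= c <= b -> derivable_pt_lim g c (g' c)) ->
  (forall c, a <= c <= b -> 0 <= g' c) -> g a <= g b.
Proof.
  intros Hab Hg Hg'. destruct (Req_dec a b) as [->|Hne]; [lra|].
  destruct (MVT_cor2 g g' a b) as [c [Hc Hcab]]; [lra|assumption|].
  assert (0 <= g' c) by (apply Hg'; lra). nra.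
Qed.

(* [f + F] and [F] are nondecreasing, where [F] is a primitive of [|f'|]. *)
Lemma ge_sub_RiemannInt_abs_deriv (f f' : R -> R) T
  (pr : Riemann_integrable (fun t => Rabs (f' t)) 0 T) :
  (forall t, derivable_pt_lim f t (f' t)) -> continuity f' ->
  forall x, 0 <= x <= T -> f 0 - RiemannInt pr <= f x.
Proof.
  intros Hf Hc x Hx.
  assert (HT : 0 <= T) by lra.
  assert (Hca : forall y, 0 <= y <= T -> continuity_pt (fun t => Rabs (f' t)) y)
    by (intros y _; apply (continuity_pt_comp f' Rabs); [apply Hc|apply Rcontinuity_abs]).
  set (F := primitive HT (FTC_P1 HT Hca)).
  assert (HF : forall y, 0 <= y <= T -> derivable_pt_lim F y (Rabs (f' y)))
    by (intros y Hy; exact (RiemannInt_P28 HT Hca Hy)).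
  rewrite (RiemannInt_P20 HT (FTC_P1 HT Hca) pr). fold F.
  assert (f 0 + F 0 <= f x + F x).
  { apply (le_of_deriv_ge0 (fun s => f s + F s) (fun s => f' s + Rabs (f' s))); [lra| |].
    - intros c Hc'. apply derivable_pt_lim_plus; [apply Hf|apply HF; lra].
    - intros c _. pose proof (Rle_abs (- f' c)). rewrite Rabs_Ropp in *. lra. }
  assert (F x <= F T).
  { apply (le_of_deriv_ge0 F (fun s => Rabs (f' s))); [lra| |].
    - intros c Hc'. apply HF; lra.
    - intros c _. apply Rabs_pos. }
  lra.
Qed.

(** * The propagator and the evolved observable *)

Section Propagator.
Variables (N : nat) (H U : R -> Mat).
Hypothesis H_cont : Mcontinuous N H.
Hypothesis H_selfadj : forall t, selfadj N (H t).
Hypothesis U_propagator : propagator0 N H U.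

Lemma propagator_Mdiff : Mdiff N U (fun t => Mscale Cminus_i (Mmul N (H t) (U t))).
Proof.
  destruct U_propagator as [_ HU]. intros i j Hi Hj. split.
  - intros t. apply HU; assumption.
  - apply Ccont_mul; [apply Ccont_const|]. apply Ccont_sum; intros k Hk.
    apply Ccont_mul; [apply H_cont; assumption|].
    split; eapply continuity_of_derivable; intros t; apply (HU t k j Hk Hj).
Qed.

(* [d/dt (U* U) = i U* H* U - i U* H U = 0] because [H] is self-adjoint. *)
Lemma propagator_unitary t : Meq N (Mmul N (Madj (U t)) (U t)) Mid.
Proof.
  assert (HD : Mdiff N (fun t => Mmul N (Madj (U t)) (U t)) (fun _ _ _ => C0)).
  { eapply Mdiff_ext; [apply Mdiff_mul; [apply Mdiff_adj|]; apply propagator_Mdiff|].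
    intros s i j Hi Hj. unfold Madd.
    rewrite Madj_scale, Madj_Mmul, Mmul_scale_l, Mmul_scale_r, Mmul_assoc. unfold Mscale.
    rewrite (Mmul_Meq N _ _ _ _ (Meq_refl N (Madj (U s)))
               (Mmul_Meq N _ _ _ _ (Madj_selfadj N _ (H_selfadj s)) (Meq_refl N (U s))) i j Hi Hj).
    Ceq. }
  intros i j Hi Hj.
  rewrite (Cdiff_0_const _ (HD i j Hi Hj) t).
  destruct U_propagator as [U0 _].
  rewrite (Mmul_Meq N _ (Madj Mid) _ Mid (Madj_Meq N _ _ U0) U0 i j Hi Hj), Madj_Mid.
  apply Mmul1l; assumption.
Qed.

Variable Q : Mat.

Definition evolved (t : R) : Mat := Mmul N (Mmul N (U t) Q) (Madj (U t)).

Definition evolved' (t : R) : Mat :=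
  Madd (Mscale Cminus_i (Mmul N (H t) (evolved t)))
       (Mscale (Cconj Cminus_i) (Mmul N (evolved t) (H t))).

Lemma evolved_Mdiff : Mdiff N evolved evolved'.
Proof.
  eapply Mdiff_ext.
  { apply Mdiff_mul; [apply Mdiff_mul_const_r|apply Mdiff_adj]; apply propagator_Mdiff. }
  intros s i j Hi Hj. unfold evolved', evolved, Madd. f_equal.
  - rewrite !Mmul_scale_l, !Mmul_assoc. reflexivity.
  - rewrite Madj_scale, Madj_Mmul, Mmul_scale_r, <- !Mmul_assoc. unfold Mscale. f_equal.
    apply (Mmul_Meq N _ _ _ _ (Meq_refl N _) (Madj_selfadj N _ (H_selfadj s))); assumption.
Qed.

Definition overlap (t : R) : C := Mtr N (Mmul N Q (evolved t)).
Definition overlap' (t : R) : C := Mtr N (Mmul N Q (evolved' t)).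

Lemma overlap_Cdiff : Cdiff overlap overlap'.
Proof. exact (Cdiff_Mtr_mul_l N Q _ _ evolved_Mdiff). Qed.

Lemma evolved_0 : Meq N (evolved 0) Q.
Proof.
  destruct U_propagator as [U0 _].
  eapply Meq_trans; [exact (Mmul_Meq N _ _ _ _ (Mmul_Meq N _ _ _ _ U0 (Meq_refl N Q))
                                           (Madj_Meq N _ _ U0))|].
  rewrite Madj_Mid. exact (Meq_trans N _ _ _ (Mmul1r N _) (Mmul1l N Q)).
Qed.

Lemma Re_overlap_0 : selfadj N Q -> Re (overlap 0) = Fro N Q.
Proof.
  intros HQ. unfold overlap.
  rewrite (Mtr_Meq N _ _ (Mmul_Meq N _ _ _ _ (Meq_refl N Q) evolved_0)).
  unfold Mtr, Mmul, Fro, nsq. rewrite Re_Csum. apply Rsum_ext; intros i Hi.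
  rewrite Re_Csum. apply Rsum_ext; intros k Hk.
  rewrite (HQ k i) by assumption. unfold Cnorm2; simpl; ring.
Qed.

Lemma Re_overlap' t : Re (overlap' t) =
  Im (Mtr N (Mmul N Q (Mmul N (H t) (evolved t))))
  - Im (Mtr N (Mmul N (evolved t) (Mmul N (H t) Q))).
Proof.
  unfold overlap', evolved'.
  rewrite Mmul_Madd_r, Mtr_add, !Mmul_scale_r, !Mtr_scale.
  rewrite (Mtr_mulC N Q (Mmul N (evolved t) (H t))), Mmul_assoc. simpl. ring.
Qed.

(* For [l = |H t| + e] each trace is at most [l |Q|_F^2] in modulus, since conjugation by
   the unitary [U t] preserves the Frobenius norm; then let [e] tend to [0]. *)
Lemma Rabs_Re_overlap'_le t : Rabs (Re (overlap' t)) <= 2 * Fro N Q * opnorm N (H t).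
Proof.
  assert (HW : Fro N (evolved t) = Fro N Q)
    by exact (Fro_conj_unitary N (U t) (propagator_unitary t) Q).
  pose proof (Fro_ge0 N Q). pose proof (opnorm_ge0 N (H t)).
  apply (Rle_of_forall_le_add_mul _ _ (2 * Fro N Q)); [lra|]. intros e He.
  assert (Hl : 0 < opnorm N (H t) + e) by lra.
  assert (Hh : opnorm N (H t) <= opnorm N (H t) + e) by lra.
  pose proof (Rabs_Im_Mtr_mul_le N _ (H t) Q (evolved t) Hl Hh) as B1.
  pose proof (Rabs_Im_Mtr_mul_le N _ (H t) (evolved t) Q Hl Hh) as B2.
  rewrite HW in B1, B2. rewrite Re_overlap'.
  eapply Rle_trans; [apply Rabs_triang|]. rewrite Rabs_Ropp. lra.
Qed.

Lemma Rintegral_zero_Re_overlap T :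
  Mintegral_zero N evolved 0 T -> Rintegral_zero 0 T (fun t => Re (overlap t)).
Proof. intros HW. exact (proj1 (Cintegral_zero_Mtr_mul_l N Q evolved 0 T HW)). Qed.

End Propagator.

Theorem mainTheorem4 (N : nat) (T : R) (H : R -> Mat) (Q : Mat) (U : R -> Mat)
  (hT : 0 < T)
  (hHcont : Mcontinuous N H)
  (hHsa : forall t, selfadj N (H t))
  (hQsa : selfadj N Q)
  (hQ0 : ~ Mzero N Q)
  (hU : propagator0 N H U)
  (hdec : Mintegral_zero N (fun tau => Mmul N (Mmul N (U tau) Q) (Madj (U tau))) 0 T) :
  forall pr : Riemann_integrable (fun t => opnorm N (H t)) 0 T,
    RiemannInt pr >= 1 / 2.
Proof.
  intros pr.
  set (c := Fro N Q). assert (Hc : 0 < c) by exact (Fro_gt0 N Q hQ0).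
  set (phi := fun t => Re (overlap N U Q t)).
  set (phi' := fun t => Re (overlap' N H U Q t)).
  destruct (Rintegral_zero_Re_overlap N U Q T hdec) as [prphi Ephi].
  destruct (overlap_Cdiff N H U hHcont hHsa hU Q) as [Hphi [Hphi' _]].
  assert (prg : Riemann_integrable (fun t => Rabs (phi' t)) 0 T).
  { apply continuity_implies_RiemannInt; [lra|]. intros x _.
    apply (continuity_pt_comp phi' Rabs); [apply Hphi'|apply Rcontinuity_abs]. }
  assert (Hg : RiemannInt prg <= 2 * c * RiemannInt pr).
  { apply RiemannInt_le_scal; [lra|]. intros x _.
    apply Rabs_Re_overlap'_le; assumption. }
  assert (Hlow : forall x, 0 < x < T -> c - 2 * c * RiemannInt pr <= phi x).
  { intros x Hx. assert (phi 0 = c) by exact (Re_overlap_0 N H U hU Q hQsa).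
    pose proof (ge_sub_RiemannInt_abs_deriv phi phi' T prg (fun t => proj1 (Hphi t))
                  Hphi' x ltac:(lra)). lra. }
  pose proof (RiemannInt_ge_const _ _ _ _ prphi (Rlt_le _ _ hT) Hlow) as Hint.
  rewrite Ephi in Hint. apply Rnot_lt_ge; intros HI.
  assert (0 < c - 2 * c * RiemannInt pr) by nra.
  assert (0 < (c - 2 * c * RiemannInt pr) * (T - 0)) by (apply Rmult_lt_0_compat; lra).
  lra.
Qed.
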